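(* Let $\mathcal O$ be a polycube with orthogonally convex layers and let $1\le i\le m-1$. If the $i$-bridge determined by the selection procedure described in the context lies on a bottom face (i.e., on the bottom of $\mathcal O_{i+1}$), then it consists of a single beam.
   Context: A polycube $\mathcal O$ is an orthogonal polyhedron homeomorphic to a sphere formed as a union of unit cubes glued along entire faces; its surface is subdivided into unit squares called cells. Let $z_0<\dots<z_m$ be the distinct $z$-coordinates of vertices of $\mathcal O$; the $i$-plane is $z=z_i$; the layer $\mathcal O_i$ is the part of $\mathcal O$ between the $(i-1)$- and $i$-planes. $\mathcal O$ has orthogonally convex layers if each $\mathcal O_i$ meets every line parallel to a coordinate axis in a single segment or not at all. The $i$-band is the cyclic sequence of vertical surface cells between the $(i-1)$- and $i$-planes. A face is a maximal edge-connected set of coplanar cells; an $i$-face lies in the $i$-plane, either on top of $\mathcal O_i$ (top face) or on the bottom of $\mathcal O_{i+1}$ (bottom face). Adjacent means boundaries share a cell edge. Cells are parallel if in parallel planes; normals are outward normals; cw/ccw around a band is as viewed from $+z$. Beams: for a band cell $a$ (on the $i$- or $(i+1)$-band) whose horizontal edge $e$ in the $i$-plane is adjacent to an $i$-face, $i$-beam$(a)$ is the portion of that $i$-face illuminated by rays from $e$ in the horizontal direction orthogonal to $a$; otherwise it is empty. A nonempty beam has two anchors: $a$ and the band cell parallel to $a$ adjacent to the beam at its other end; both anchors define the same beam. Selection procedure. Each $i$-band gets a direction ($i$-pointer $\in\{cw,ccw\}$) and cells $L_i,R_i$. For an $i$-band cell $r$, $i$-clip$(r)$ is empty if $i$-beam$(r)$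 is empty, and otherwise is the portion of the $i$-face containing $i$-beam$(r)$ delimited by (and including) $i$-beam$(r)$ and extending from it in the direction of the $i$-pointer from $r$. Initialization: 1-pointer $=ccw$; choose a top 1-face $F$ and two opposite cell edges $e_1,e_2$ on its boundary with $e_1$ adjacent to the 1-band and $e_2$ adjacent to the 2-band; $R_1$ is the 1-band cell adjacent to $e_1$, $L_1$ is the 1-band cell adjacent to $R_1$ in the ccw direction, the 1-bridge is 1-beam$(R_1)$, $L_2$ is the 2-band cell adjacent to $e_2$, and the 2-pointer is $ccw$. Recursive step ($i\ge 2$, given $L_i$ and the $i$-pointer): walking around the $i$-band starting at $L_i$ in the direction of the $i$-pointer, $R_i$ is the last encountered $i$-band cell such that $i$-clip$(R_i)$ is empty or adjacent to an $(i+1)$-band cell parallel to $R_i$. If $i$-clip$(R_i)$ is empty, $L_{i+1}$ is the $(i+1)$-band cell adjacent to $R_i$, the $i$-bridge is empty and the $(i+1)$-pointer equals the $i$-pointer. Otherwise, partitioning $i$-clip$(R_i)$ into beams parallel to $i$-beam$(R_i)$: $L_{i+1}$ is the $(i+1)$-band cell parallel to $R_i$ and adjacent to $i$-clip$(R_i)$ minimizing the number of beams delimited by $i$-beam$(R_i)$ and $i$-beam$(L_{i+1})$, ties broken by minimum Manhattan distance to $R_i$; the $i$-bridge consists of $i$-beam$(R_i)$, $i$-beam$(L_{i+1})$ and the beams between them (its beams are those of this partition); the $(i+1)$-pointer equals the $i$-pointer if $R_i$ and $L_{i+1}$ have the same normal and is opposite otherwise. *)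

From Stdlib Require Import ZArith Reals List.
Import ListNotations.

Open Scope Z_scope.

(* the unit cube [x,x+1] x [y,y+1] x [z,z+1] is represented by (x,y,z) *)
Definition cube := (Z * Z * Z)%type.
Definition cx (c : cube) : Z := fst (fst c).
Definition cy (c : cube) : Z := snd (fst c).
Definition cz (c : cube) : Z := snd c.

Definition pos := (Z * Z)%type.
Definition xy (c : cube) : pos := (cx c, cy c).
Definition mkcube (p : pos) (z : Z) : cube := ((fst p, snd p), z).
Definition padd (p q : pos) : pos := (fst p + fst q, snd p + snd q).
Definition psub (p q : pos) : pos := (fst p - fst q, snd p - snd q).
Definition pscale (j : Z) (p : pos) : pos := (j * fst p, j * snd p).
Definition pdot (p q : pos) : Z := fst p * fst q + snd p * snd q.
Definition cshift (c : cube) (v : pos) : cube := ((cx c + fst v, cy c + snd v), cz c).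
Definition cup (c : cube) : cube := ((cx c, cy c), cz c + 1).

(* the four horizontal directions (outward normals of vertical cells) *)
Inductive hdir := dE | dN | dW | dS.
Definition dvec (d : hdir) : pos :=
  match d with dE => (1, 0) | dN => (0, 1) | dW => (-1, 0) | dS => (0, -1) end.
Definition rotl (d : hdir) : hdir :=
  match d with dE => dN | dN => dW | dW => dS | dS => dE end.
Definition rotr (d : hdir) : hdir :=
  match d with dE => dS | dS => dW | dW => dN | dN => dE end.
Definition opp (d : hdir) : hdir := rotl (rotl d).
(* two vertical cells are parallel iff their normals are parallel *)
Definition parallel (d d' : hdir) : Prop := d' = d \/ d' = opp d.

Definition adj4 (p q : pos) : Prop := exists d, q = padd p (dvec d).

(* A polycube is given by the finite list of its unit cubes. *)
Definition cubeb (c c' : cube) : bool :=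
  (cx c =? cx c') && (cy c =? cy c') && (cz c =? cz c').
Definition memb (P : list cube) (c : cube) : bool := existsb (cubeb c) P.

Definition zlo (P : list cube) : Z :=
  match P with [] => 0 | c :: r => fold_right (fun c' a => Z.min (cz c') a) (cz c) r end.
Definition zhi (P : list cube) : Z :=
  match P with [] => 0 | c :: r => fold_right (fun c' a => Z.max (cz c') a) (cz c) r end.
(* planes z_0 < ... < z_m are z = zlo + j (j = 0..m); layer O_i (1 <= i <= m)
   consists of the cubes with z-coordinate zlo + i - 1 *)
Definition nlayers (P : list cube) : Z := zhi P - zlo P + 1.
Definition zplane (P : list cube) (i : Z) : Z := zlo P + i.

Definition pt := (R * R * R)%type.
Definition px (x : pt) : R := fst (fst x).
Definition py (x : pt) : R := snd (fst x).
Definition pz (x : pt) : R := snd x.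

Definition in_cube (c : cube) (x : pt) : Prop :=
  (IZR (cx c) <= px x <= IZR (cx c) + 1)%R /\
  (IZR (cy c) <= py x <= IZR (cy c) + 1)%R /\
  (IZR (cz c) <= pz x <= IZR (cz c) + 1)%R.

Definition solid (P : list cube) (x : pt) : Prop :=
  exists c, memb P c = true /\ in_cube c x.

Definition layer_solid (P : list cube) (i : Z) (x : pt) : Prop :=
  exists c, memb P c = true /\ cz c = zlo P + i - 1 /\ in_cube c x.

Definition d3 (x y : pt) : R :=
  (Rabs (px x - px y) + Rabs (py x - py y) + Rabs (pz x - pz y))%R.

Definition surface (P : list cube) (x : pt) : Prop :=
  solid P x /\ forall eps, (0 < eps)%R -> exists y, (d3 x y < eps)%R /\ ~ solid P y.

Definition unit_sphere (x : pt) : Prop :=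
  (px x * px x + py x * py x + pz x * pz x = 1)%R.

Definition continuous_on (A : pt -> Prop) (f : pt -> pt) : Prop :=
  forall x, A x -> forall eps, (0 < eps)%R -> exists delta, (0 < delta)%R /\
    forall y, A y -> (d3 x y < delta)%R -> (d3 (f x) (f y) < eps)%R.

Definition homeomorphic (A B : pt -> Prop) : Prop :=
  exists f g : pt -> pt,
    (forall x, A x -> B (f x)) /\ (forall y, B y -> A (g y)) /\
    (forall x, A x -> g (f x) = x) /\ (forall y, B y -> f (g y) = y) /\
    continuous_on A f /\ continuous_on B g.

Definition is_polycube (P : list cube) : Prop := homeomorphic (surface P) unit_sphere.

Definition lerp (x y : pt) (t : R) : pt :=
  ((px x + t * (px y - px x), py x + t * (py y - py x)), pz x + t * (pz y - pz x))%R.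

Definition axis_aligned (x y : pt) : Prop :=
  (px x = px y /\ py x = py y) \/ (px x = px y /\ pz x = pz y) \/
  (py x = py y /\ pz x = pz y).

Definition orth_convex_layers (P : list cube) : Prop :=
  forall i, 1 <= i <= nlayers P ->
  forall x y, layer_solid P i x -> layer_solid P i y -> axis_aligned x y ->
  forall t, (0 <= t <= 1)%R -> layer_solid P i (lerp x y t).

(* vertical cell: the face of cube vc with outward normal vd *)
Record vcell := VCell { vc : cube ; vd : hdir }.

Definition vsurf (P : list cube) (v : vcell) : Prop :=
  memb P (vc v) = true /\ memb P (cshift (vc v) (dvec (vd v))) = false.

Definition band (P : list cube) (i : Z) (v : vcell) : Prop :=
  vsurf P v /\ cz (vc v) = zlo P + i - 1.

Definition hsurf (P : list cube) (k : Z) (p : pos) : Prop :=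
  memb P (mkcube p (k - 1)) <> memb P (mkcube p k).
Definition topcell (P : list cube) (k : Z) (p : pos) : Prop :=
  memb P (mkcube p (k - 1)) = true /\ memb P (mkcube p k) = false.
Definition botcell (P : list cube) (k : Z) (p : pos) : Prop :=
  memb P (mkcube p k) = true /\ memb P (mkcube p (k - 1)) = false.

Inductive reach (S : pos -> Prop) : pos -> pos -> Prop :=
| reach_refl p : S p -> reach S p p
| reach_step p q r : reach S p q -> adj4 q r -> S r -> reach S p r.

Definition run (P : list cube) (k : Z) (s t : pos) (j : Z) : Prop :=
  forall j', 0 <= j' <= j -> hsurf P k (padd s (pscale j' t)).

(* q is a cell of the beam of the vertical cell v through its horizontal
   edge in the plane z = k (the edge between the columns of vc v and of
   vc v + vd v): the maximal straight strip of face cells starting at the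
   face cell adjacent to that edge, in the direction orthogonal to v *)
Definition in_beam (P : list cube) (k : Z) (v : vcell) (q : pos) : Prop :=
  let c := xy (vc v) in let d := dvec (vd v) in
  (exists j, 0 <= j /\ run P k c (pscale (-1) d) j /\ q = padd c (pscale (- j) d)) \/
  (exists j, 0 <= j /\ run P k (padd c d) d j /\ q = padd c (pscale (j + 1) d)).

(* i-beam(v), for v on the i-band or on the (i+1)-band *)
Definition ibeam (P : list cube) (i : Z) (v : vcell) (q : pos) : Prop :=
  in_beam P (zplane P i) v q.

(* the far end edge of the beam of v in plane k: between the last beam cell p
   and the next (non-face) position p' *)
Definition far_edge (P : list cube) (k : Z) (v : vcell) (p p' : pos) : Prop :=
  let c := xy (vc v) in let d := dvec (vd v) in
  (exists j, 0 <= j /\ run P k c (pscale (-1) d) j /\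
     ~ hsurf P k (padd c (pscale (- (j + 1)) d)) /\
     p = padd c (pscale (- j) d) /\ p' = padd c (pscale (- (j + 1)) d)) \/
  (exists j, 0 <= j /\ run P k (padd c d) d j /\
     ~ hsurf P k (padd c (pscale (j + 2) d)) /\
     p = padd c (pscale (j + 1) d) /\ p' = padd c (pscale (j + 2) d)).

Definition edge_cols (v : vcell) (p p' : pos) : Prop :=
  (xy (vc v) = p /\ padd (xy (vc v)) (dvec (vd v)) = p') \/
  (xy (vc v) = p' /\ padd (xy (vc v)) (dvec (vd v)) = p).

(* vertical cell v shares a horizontal edge with the horizontal cell at q
   (in the plane of that edge) *)
Definition vh_adj (v : vcell) (q : pos) : Prop :=
  q = xy (vc v) \/ q = padd (xy (vc v)) (dvec (vd v)).

Definition iface_of_beam (P : list cube) (i : Z) (v : vcell) (q : pos) : Prop :=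
  exists q0, ibeam P i v q0 /\ reach (hsurf P (zplane P i)) q0 q.

Inductive pointer := cw | ccw.
Definition flip (p : pointer) : pointer := match p with cw => ccw | ccw => cw end.
(* direction of motion along a band cell with normal d, walking in direction ptr *)
Definition pdir (ptr : pointer) (d : hdir) : hdir :=
  match ptr with ccw => rotl d | cw => rotr d end.

(* the next cell of the band (boundary of the layer cross-section) when
   walking from v in direction ptr *)
Definition succ (P : list cube) (ptr : pointer) (v : vcell) : vcell :=
  let c := vc v in let d := vd v in let w := pdir ptr d in
  let a := cshift c (dvec w) in
  let b := cshift a (dvec d) in
  if memb P b then VCell b (opp w)
  else if memb P a then VCell a d
  else VCell c w.

Definition period {A} (f : A -> A) (x : A) (n : nat) : Prop :=
  (0 < n)%nat /\ Nat.iter n f x = x /\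
  forall n', (0 < n' < n)%nat -> Nat.iter n' f x <> x.

(* i-clip(r) for an i-band cell r, given the i-pointer ptr: the part of the
   i-face containing i-beam(r) reachable from i-beam(r) in the closed half
   plane bounded by the line of the beam and lying on the side of the
   pointer direction *)
Definition clip (P : list cube) (i : Z) (ptr : pointer) (r : vcell) (q : pos) : Prop :=
  let w := dvec (pdir ptr (vd r)) in
  exists q0, ibeam P i r q0 /\
    reach (fun p => hsurf P (zplane P i) p /\ 0 <= pdot (psub p (xy (vc r))) w) q0 q.

Definition sameStrip (S : pos -> Prop) (u : pos) (q q' : pos) : Prop :=
  S q /\ exists j, q' = padd q (pscale j u) /\
    forall j', (0 <= j' <= j \/ j <= j' <= 0) -> S (padd q (pscale j' u)).

Definition stripAdj (S : pos -> Prop) (u : pos) (q q' : pos) : Prop :=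
  exists a b, sameStrip S u q a /\ sameStrip S u q' b /\ adj4 a b.

(* a chain of n consecutive adjacent beams (strips of S parallel to u),
   the first containing q and the last containing q' *)
Fixpoint chain (Sg : pos -> Prop) (u : pos) (n : nat) (q q' : pos) : Prop :=
  match n with
  | O => False
  | S O => sameStrip Sg u q q'
  | S n' => exists q'', stripAdj Sg u q q'' /\ chain Sg u n' q'' q'
  end.

Definition beam_chain (P : list cube) (i : Z) (ptr : pointer) (r v : vcell) (n : nat) : Prop :=
  exists q q', ibeam P i r q /\ ibeam P i v q' /\
    chain (clip P i ptr r) (dvec (vd r)) n q q'.

(* n = number of beams (of the partition of i-clip(r) into beams parallel to
   i-beam(r)) delimited by i-beam(r) and i-beam(v), both included *)
Definition nbeams (P : list cube) (i : Z) (ptr : pointer) (r v : vcell) (n : nat) : Prop :=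
  beam_chain P i ptr r v n /\ forall n', (n' < n)%nat -> ~ beam_chain P i ptr r v n'.

(* (doubled) centre of a vertical cell and Manhattan distance *)
Definition center2 (v : vcell) : Z * Z * Z :=
  let c := vc v in let d := dvec (vd v) in
  ((2 * cx c + 1 + fst d, 2 * cy c + 1 + snd d), 2 * cz c + 1).
Definition mdist (v v' : vcell) : Z :=
  let a := center2 v in let b := center2 v' in
  Z.abs (fst (fst a) - fst (fst b)) + Z.abs (snd (fst a) - snd (fst b)) +
  Z.abs (snd a - snd b).

Definition clip_empty (P : list cube) (i : Z) (ptr : pointer) (r : vcell) : Prop :=
  forall q, ~ clip P i ptr r q.

Definition goodR (P : list cube) (i : Z) (ptr : pointer) (r : vcell) : Prop :=
  clip_empty P i ptr r \/
  exists v q, band P (i + 1) v /\ parallel (vd r) (vd v) /\ clip P i ptr r q /\ vh_adj v q.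

Definition selectR (P : list cube) (i : Z) (ptr : pointer) (l r : vcell) : Prop :=
  exists n a, period (succ P ptr) l n /\ (a < n)%nat /\
    r = Nat.iter a (succ P ptr) l /\ goodR P i ptr r /\
    forall b, (a < b < n)%nat -> ~ goodR P i ptr (Nat.iter b (succ P ptr) l).

Definition candL (P : list cube) (i : Z) (ptr : pointer) (r v : vcell) : Prop :=
  band P (i + 1) v /\ parallel (vd r) (vd v) /\
  exists q, clip P i ptr r q /\ vh_adj v q.

Definition selectL (P : list cube) (i : Z) (ptr : pointer) (r v : vcell) : Prop :=
  candL P i ptr r v /\
  exists n, nbeams P i ptr r v n /\
    forall v' n', candL P i ptr r v' -> nbeams P i ptr r v' n' ->
      (n <= n')%nat /\ (n' = n -> mdist v r <= mdist v' r).

Definition above_adj (r v : vcell) : Prop :=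
  (vc v = cup (vc r) /\ vd v = vd r) \/
  (vc v = cup (cshift (vc r) (dvec (vd r))) /\ vd v = opp (vd r)).

Definition init_ok (P : list cube) (ptr : Z -> pointer) (L R : Z -> vcell) : Prop :=
  ptr 1 = ccw /\ ptr 2 = ccw /\
  band P 1 (R 1) /\ L 1 = succ P ccw (R 1) /\
  (exists q, ibeam P 1 (R 1) q) /\
  (forall q, iface_of_beam P 1 (R 1) q -> topcell P (zplane P 1) q) /\
  band P 2 (L 2) /\
  exists p p', far_edge P (zplane P 1) (R 1) p p' /\ edge_cols (L 2) p p'.

Definition step_ok (P : list cube) (ptr : Z -> pointer) (L R : Z -> vcell) (i : Z) : Prop :=
  selectR P i (ptr i) (L i) (R i) /\
  ((clip_empty P i (ptr i) (R i) /\ band P (i + 1) (L (i + 1)) /\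
    above_adj (R i) (L (i + 1)) /\ ptr (i + 1) = ptr i) \/
   (~ clip_empty P i (ptr i) (R i) /\ selectL P i (ptr i) (R i) (L (i + 1)) /\
    (vd (R i) = vd (L (i + 1)) -> ptr (i + 1) = ptr i) /\
    (vd (R i) <> vd (L (i + 1)) -> ptr (i + 1) = flip (ptr i)))).

Definition selection_upto (P : list cube) (ptr : Z -> pointer) (L R : Z -> vcell) (i : Z) : Prop :=
  init_ok P ptr L R /\ forall j, 2 <= j <= i -> step_ok P ptr L R j.

(* The beam of R_i is a maximal row of cells of a bottom face: each cell
   lies under a cube of layer i+1 and over no cube of layer i.  Just past
   either end of the beam the cell is not on the surface, so that column is
   full in both layers or empty in both.  If it were full at both ends,
   orthogonal convexity of layer i would put a cube of layer i under the
   beam.  Hence at one end the row of cubes of layer i+1 stops, and the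
   vertical face there is an (i+1)-band cell parallel to R_i whose beam is
   the beam of R_i: a candidate delimiting a single beam.  As L_{i+1}
   minimises the number of beams, the bridge is that single beam.  For i = 1
   the bridge lies on a top face by construction, and the clip of R_i is
   never empty since it contains the beam. *)

From Pilot Require Import Defs.
From Stdlib Require Import ZArith Reals Lia Lra Classical.
Open Scope Z_scope.

Definition along (v : vcell) (t : Z) : Defs.pos :=
  padd (xy (vc v)) (pscale t (dvec (vd v))).

Ltac pos_eq :=
  unfold along, padd, pscale, xy, mkcube;
  apply injective_projections; cbn [fst snd]; ring.

Ltac apply_at_pos H :=
  match goal with |- ?S _ => eapply (@eq_ind _ _ S); [apply H; lia | pos_eq] end.

Lemma xy_mkcube p z : xy (mkcube p z) = p.
Proof. destruct p; reflexivity. Qed.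

Lemma dvec_opp d : dvec (opp d) = pscale (-1) (dvec d).
Proof. destruct d; reflexivity. Qed.

Lemma along_succ v t : padd (along v t) (dvec (vd v)) = along v (t + 1).
Proof. pos_eq. Qed.

Lemma along_pred v t : padd (along v t) (dvec (opp (vd v))) = along v (t - 1).
Proof. rewrite dvec_opp. pos_eq. Qed.

Lemma sameStrip_refl S u q : S q -> sameStrip S u q q.
Proof.
  intros Hq. split; [exact Hq|]. exists 0. split; [pos_eq|].
  intros j' Hj'. replace j' with 0 by lia. apply_at_pos Hq.
Qed.

Lemma sameStrip_sub (S S' : Defs.pos -> Prop) u q q' :
  (forall p, S p -> S' p) -> sameStrip S u q q' -> sameStrip S' u q q'.
Proof. intros HS [Hq [j [Hj Hseg]]]. split; auto. exists j. split; auto. Qed.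

Lemma sameStrip_sym S u q q' : sameStrip S u q q' -> sameStrip S u q' q.
Proof.
  intros [_ [j [-> Hseg]]]. split; [apply Hseg; lia|].
  exists (- j). split; [pos_eq|]. intros j' Hj'. apply_at_pos (Hseg (j + j')).
Qed.

Lemma sameStrip_trans S u q q' q'' :
  sameStrip S u q q' -> sameStrip S u q' q'' -> sameStrip S u q q''.
Proof.
  intros [Hq [j [-> Hseg]]] [_ [j2 [-> Hseg2]]]. split; [exact Hq|].
  exists (j + j2). split; [pos_eq|]. intros j' Hj'.
  destruct (classic (0 <= j' <= j \/ j <= j' <= 0)) as [Hin|Hout].
  - apply Hseg, Hin.
  - apply_at_pos (Hseg2 (j' - j)).
Qed.

Lemma sameStrip_trans_iff S u q q' q'' :
  sameStrip S u q q' -> (sameStrip S u q' q'' <-> sameStrip S u q q'').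
Proof.
  intros H. split; intros H'.
  - exact (sameStrip_trans _ _ _ _ _ H H').
  - exact (sameStrip_trans _ _ _ _ _ (sameStrip_sym _ _ _ _ H) H').
Qed.

Lemma sameStrip_neg S u q q' : sameStrip S u q q' -> sameStrip S (pscale (-1) u) q q'.
Proof.
  intros [Hq [j [-> Hseg]]]. split; [exact Hq|]. exists (- j). split; [pos_eq|].
  intros j' Hj'. apply_at_pos (Hseg (- j')).
Qed.

Lemma sameStrip_parallel S d d' q q' :
  parallel d d' -> sameStrip S (dvec d) q q' <-> sameStrip S (dvec d') q q'.
Proof.
  intros [-> | ->]; [tauto|]. rewrite dvec_opp. split; [apply sameStrip_neg|].
  intros H. apply sameStrip_neg in H.
  replace (pscale (-1) (pscale (-1) (dvec d))) with (dvec d) in H by pos_eq.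
  exact H.
Qed.

(* Offsets [t <= 0] are the columns on the side of [vc v], offsets [t >= 1]
   those beyond its horizontal edge. *)
Definition beam_offset (S : Defs.pos -> Prop) (v : vcell) (t : Z) : Prop :=
  (t <= 0 /\ forall s, t <= s <= 0 -> S (along v s)) \/
  (1 <= t /\ forall s, 1 <= s <= t -> S (along v s)).

Lemma in_beam_along P k v x :
  in_beam P k v x <-> exists t, x = along v t /\ beam_offset (hsurf P k) v t.
Proof.
  unfold in_beam, run, beam_offset. split.
  - intros [[j [Hj [Hrun ->]]] | [j [Hj [Hrun ->]]]].
    + exists (- j). split; [pos_eq|]. left. split; [lia|].
      intros s Hs. apply_at_pos (Hrun (- s)).
    + exists (j + 1). split; [pos_eq|]. right. split; [lia|].
      intros s Hs. apply_at_pos (Hrun (s - 1)).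
  - intros [t [-> [[Ht Hseg] | [Ht Hseg]]]].
    + left. exists (- t). split; [lia|]. split; [|pos_eq].
      intros j' Hj'. apply_at_pos (Hseg (- j')).
    + right. exists (t - 1). split; [lia|]. split; [|pos_eq].
      intros j' Hj'. apply_at_pos (Hseg (j' + 1)).
Qed.

Lemma beam_offset_self S v t : beam_offset S v t -> S (along v t).
Proof. intros [[Ht Hseg] | [Ht Hseg]]; apply Hseg; lia. Qed.

Lemma sameStrip_along S v t t' :
  (forall s, t <= s <= t' \/ t' <= s <= t -> S (along v s)) ->
  sameStrip S (dvec (vd v)) (along v t) (along v t').
Proof.
  intros Hseg. split; [apply Hseg; lia|]. exists (t' - t). split; [pos_eq|].
  intros j' Hj'. apply_at_pos (Hseg (t + j')).
Qed.

Lemma in_beam_sameStrip P k v x y :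
  in_beam P k v x ->
  (in_beam P k v y <-> sameStrip (hsurf P k) (dvec (vd v)) x y).
Proof.
  rewrite !in_beam_along. intros [t [-> Ht]]. split.
  - intros [t' [-> Ht']]. apply sameStrip_along. intros s Hs.
    destruct Ht as [[? Hseg] | [? Hseg]], Ht' as [[? Hseg'] | [? Hseg']];
      destruct (Z_le_dec s 0), (Z_le_dec t s), (Z_le_dec s t), (Z_le_dec t' s), (Z_le_dec s t');
      first [apply Hseg; lia | apply Hseg'; lia].
  - intros [_ [m [-> Hseg]]].
    assert (Hm : forall s, t <= s <= t + m \/ t + m <= s <= t -> hsurf P k (along v s)).
    { intros s Hs. apply_at_pos (Hseg (s - t)). }
    exists (t + m). split; [pos_eq|]. unfold beam_offset.
    destruct (Z_le_dec (t + m) 0); [left | right]; (split; [lia|]); intros s Hs;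
      destruct Ht as [[? Hseg'] | [? Hseg']]; destruct (Z_le_dec s t);
      first [apply Hm; lia | apply Hseg'; lia].
Qed.

Lemma ibeam_hsurf P i v x : ibeam P i v x -> hsurf P (zplane P i) x.
Proof.
  unfold ibeam. rewrite in_beam_along. intros [t [-> Ht]].
  exact (beam_offset_self _ _ _ Ht).
Qed.

Lemma ibeam_base P i v : hsurf P (zplane P i) (xy (vc v)) -> ibeam P i v (xy (vc v)).
Proof.
  intros H. unfold ibeam. rewrite in_beam_along. exists 0. split; [pos_eq|].
  left. split; [lia|]. intros s Hs. replace s with 0 by lia. apply_at_pos H.
Qed.

Lemma ibeam_iface P i v x : ibeam P i v x -> iface_of_beam P i v x.
Proof.
  intros Hx. exists x. split; [exact Hx|]. apply reach_refl. exact (ibeam_hsurf _ _ _ _ Hx).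
Qed.

Lemma ibeam_clip P i ptr r x : ibeam P i r x -> clip P i ptr r x.
Proof.
  intros Hx. exists x. split; [exact Hx|]. apply reach_refl.
  split; [exact (ibeam_hsurf _ _ _ _ Hx)|].
  unfold ibeam in Hx. rewrite in_beam_along in Hx. destruct Hx as [t [-> _]].
  unfold along, pdot, psub, padd, pscale. destruct (vd r), ptr; simpl; lia.
Qed.

Lemma clip_hsurf P i ptr r x : clip P i ptr r x -> hsurf P (zplane P i) x.
Proof.
  intros [q0 [_ Hreach]].
  assert (H : forall p q, reach (fun p => hsurf P (zplane P i) p /\
                             0 <= pdot (psub p (xy (vc r))) (dvec (pdir ptr (vd r)))) p q ->
                          hsurf P (zplane P i) q) by (induction 1; tauto).
  exact (H _ _ Hreach).
Qed.

Lemma ibeam_parallel_eq P i v w x y :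
  ibeam P i v x -> ibeam P i w y -> parallel (vd v) (vd w) ->
  sameStrip (hsurf P (zplane P i)) (dvec (vd v)) x y ->
  forall q, ibeam P i w q <-> ibeam P i v q.
Proof.
  unfold ibeam. intros Hx Hy Hpar Hxy q.
  rewrite (in_beam_sameStrip _ _ _ _ q Hy), (in_beam_sameStrip _ _ _ _ q Hx).
  rewrite <- (sameStrip_parallel _ _ _ _ _ Hpar).
  exact (sameStrip_trans_iff _ _ _ _ _ Hxy).
Qed.

Lemma nbeams_shared_cell P i ptr r v x :
  ibeam P i r x -> ibeam P i v x -> nbeams P i ptr r v 1.
Proof.
  intros Hr Hv. split.
  - exists x, x. split; [exact Hr|]. split; [exact Hv|].
    apply sameStrip_refl, ibeam_clip, Hr.
  - intros n' Hn'. replace n' with 0%nat by lia. intros [q [q' [_ [_ []]]]].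
Qed.

Lemma candL_over_beam P i ptr r v :
  band P (i + 1) v -> parallel (vd r) (vd v) -> ibeam P i r (xy (vc v)) ->
  candL P i ptr r v /\ nbeams P i ptr r v 1.
Proof.
  intros Hband Hpar Hr.
  assert (Hv : ibeam P i v (xy (vc v))) by exact (ibeam_base _ _ _ (ibeam_hsurf _ _ _ _ Hr)).
  split.
  - split; [exact Hband|]. split; [exact Hpar|].
    exists (xy (vc v)). split; [apply ibeam_clip, Hr | left; reflexivity].
  - exact (nbeams_shared_cell _ _ _ _ _ _ Hr Hv).
Qed.

Lemma selectL_single_beam P i ptr r l :
  selectL P i ptr r l ->
  (exists v, candL P i ptr r v /\ nbeams P i ptr r v 1) ->
  forall q, ibeam P i l q <-> ibeam P i r q.
Proof.
  intros [[_ [Hpar _]] [n [[Hchain _] Hmin]]] [v [Hcand Hv]].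
  destruct (Hmin v 1%nat Hcand Hv) as [Hn _].
  destruct n as [|[|]]; [destruct Hchain as [? [? [_ [_ []]]]] | | lia].
  destruct Hchain as [x [y [Hx [Hy Hxy]]]].
  apply (ibeam_parallel_eq _ _ _ _ _ _ Hx Hy Hpar).
  exact (sameStrip_sub _ _ _ _ _ (clip_hsurf P i ptr r) Hxy).
Qed.

Definition col_bound (P : list cube) : Z :=
  List.fold_right (fun c a => Z.abs (cx c) + Z.abs (cy c) + a) 0 P.

Lemma memb_col_bound P c : memb P c = true -> Z.abs (cx c) + Z.abs (cy c) <= col_bound P.
Proof.
  assert (Hnonneg : forall P', 0 <= col_bound P') by (induction P'; simpl; lia).
  induction P as [|a P IH]; simpl; [discriminate|]. intros H.
  apply Bool.orb_true_iff in H as [H|H].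
  - unfold cubeb in H. apply andb_prop in H as [H _]. apply andb_prop in H as [Hx Hy].
    apply Z.eqb_eq in Hx. apply Z.eqb_eq in Hy. rewrite Hx, Hy. specialize (Hnonneg P). lia.
  - specialize (IH H). lia.
Qed.

Lemma hsurf_along_bound P k v t :
  hsurf P k (along v t) -> Z.abs t <= col_bound P + Z.abs (cx (vc v)) + Z.abs (cy (vc v)).
Proof.
  unfold hsurf. intros H.
  assert (Hcol : Z.abs (fst (along v t)) + Z.abs (snd (along v t)) <= col_bound P).
  { destruct (memb P (mkcube (along v t) (k - 1))) eqn:E1;
      [|destruct (memb P (mkcube (along v t) k)) eqn:E2; [|congruence]];
      match goal with E : memb P ?c = true |- _ => exact (memb_col_bound P c E) end. }
  unfold along, padd, pscale, xy in Hcol. destruct (vd v); cbn [fst snd dvec] in Hcol; lia.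
Qed.

Lemma run_end_exists (Q : Z -> Prop) M t0 :
  Q t0 -> (forall t, Q t -> t <= M) ->
  exists b, t0 <= b /\ (forall s, t0 <= s <= b -> Q s) /\ ~ Q (b + 1).
Proof.
  intros Hq HM.
  assert (Hind : forall n t0, M - t0 < Z.of_nat n -> Q t0 ->
            exists b, t0 <= b /\ (forall s, t0 <= s <= b -> Q s) /\ ~ Q (b + 1)).
  { induction n as [|n IH]; intros t Hn Ht; [specialize (HM t Ht); lia|].
    destruct (classic (Q (t + 1))) as [Hnext|Hstop].
    - destruct (IH (t + 1)) as [b [Hb [Hrun Hend]]]; [lia | exact Hnext|].
      exists b. split; [lia|]. split; [|exact Hend].
      intros s Hs. destruct (Z.eq_dec s t) as [->|]; [exact Ht | apply Hrun; lia].
    - exists t. split; [lia|]. split; [|exact Hstop].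
      intros s Hs. replace s with t by lia. exact Ht. }
  exact (Hind (Z.to_nat (M - t0 + 1)) t0 ltac:(lia) Hq).
Qed.

Lemma run_extent_exists (Q : Z -> Prop) M t0 :
  Q t0 -> (forall t, Q t -> Z.abs t <= M) ->
  exists lo b, lo <= t0 <= b /\ (forall s, lo <= s <= b -> Q s) /\
               ~ Q (lo - 1) /\ ~ Q (b + 1).
Proof.
  intros Hq HM.
  destruct (run_end_exists Q M t0 Hq) as [b [Hb [Hup Hbend]]].
  { intros t Ht. specialize (HM t Ht). lia. }
  destruct (run_end_exists (fun t => Q (- t)) M (- t0)) as [a [Ha [Hdown Haend]]].
  { rewrite Z.opp_involutive. exact Hq. }
  { intros t Ht. specialize (HM _ Ht). lia. }
  exists (- a), b. split; [lia|]. split.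
  - intros s Hs. destruct (Z_le_dec t0 s); [apply Hup; lia|].
    rewrite <- (Z.opp_involutive s). apply Hdown. lia.
  - split; [|exact Hbend]. replace (- a - 1) with (- (a + 1)) by lia. exact Haend.
Qed.

Lemma beam_extent P k v x :
  in_beam P k v x ->
  exists lo b, lo <= b /\ (forall s, lo <= s <= b -> in_beam P k v (along v s)) /\
               ~ hsurf P k (along v (lo - 1)) /\ ~ hsurf P k (along v (b + 1)).
Proof.
  intros Hx. pose proof Hx as Hx'. rewrite in_beam_along in Hx'.
  destruct Hx' as [t0 [-> Ht0]].
  destruct (run_extent_exists (fun t => hsurf P k (along v t))
              (col_bound P + Z.abs (cx (vc v)) + Z.abs (cy (vc v))) t0)
    as [lo [b [Hlob [Hrun [Hlo Hb]]]]].
  { exact (beam_offset_self _ _ _ Ht0). }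
  { intros t. apply hsurf_along_bound. }
  exists lo, b. split; [lia|]. split; [|tauto].
  intros s Hs. apply (in_beam_sameStrip _ _ _ _ _ Hx), sameStrip_along.
  intros s' Hs'. apply Hrun. lia.
Qed.

Definition cell_center (p : Defs.pos) (z : Z) : pt :=
  ((IZR (fst p) + /2, IZR (snd p) + /2), IZR z + /2)%R.

Lemma IZR_half_between (a b : Z) : (IZR a <= IZR b + /2 <= IZR a + 1)%R -> a = b.
Proof.
  intros [H1 H2].
  destruct (Z_le_dec a b) as [Hab|Hab]; [destruct (Z_le_dec b a) as [Hba|Hba]|].
  - lia.
  - assert (Hlt : (IZR a + 1 <= IZR b)%R) by (rewrite <- plus_IZR; apply IZR_le; lia). lra.
  - assert (Hlt : (IZR b + 1 <= IZR a)%R) by (rewrite <- plus_IZR; apply IZR_le; lia). lra.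
Qed.

Lemma layer_solid_center P i p :
  layer_solid P i (cell_center p (zlo P + i - 1)) <-> memb P (mkcube p (zlo P + i - 1)) = true.
Proof.
  split.
  - intros [[[x y] z] [Hm [Hz Hin]]].
    unfold in_cube, cell_center, px, py, pz, cx, cy, cz in *; simpl in *.
    destruct Hin as [Hx [Hy Hz']].
    apply IZR_half_between in Hx, Hy, Hz'. unfold mkcube. subst. exact Hm.
  - intros Hm. exists (mkcube p (zlo P + i - 1)). split; [exact Hm|]. split; [reflexivity|].
    unfold in_cube, cell_center, px, py, pz, mkcube, cx, cy, cz; simpl. lra.
Qed.

Lemma layer_row_convex P i v a b t :
  orth_convex_layers P -> 1 <= i <= nlayers P ->
  memb P (mkcube (along v a) (zlo P + i - 1)) = true ->
  memb P (mkcube (along v b) (zlo P + i - 1)) = true ->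
  a < t < b -> memb P (mkcube (along v t) (zlo P + i - 1)) = true.
Proof.
  intros Hconv Hi Ha Hb Ht. apply layer_solid_center.
  set (z := zlo P + i - 1) in *.
  assert (Hat : (IZR a < IZR t)%R) by (apply IZR_lt; lia).
  assert (Htb : (IZR t < IZR b)%R) by (apply IZR_lt; lia).
  set (lam := ((IZR t - IZR a) / (IZR b - IZR a))%R).
  assert (Hlerp : lerp (cell_center (along v a) z) (cell_center (along v b) z) lam
                  = cell_center (along v t) z).
  { unfold lerp, cell_center, px, py, pz, along, padd, pscale, lam; simpl.
    rewrite !plus_IZR, !mult_IZR. f_equal; [f_equal|]; field; lra. }
  rewrite <- Hlerp. apply (Hconv i Hi); try apply layer_solid_center; auto.
  - unfold axis_aligned, cell_center, px, py, pz, along, padd, pscale; simpl.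
    destruct (vd v); simpl; rewrite ?Z.mul_0_r, ?Z.add_0_r;
      [right; right | right; left | right; right | right; left]; split; reflexivity.
  - unfold lam. split.
    + apply Rmult_le_pos; [lra|]. left. apply Rinv_0_lt_compat. lra.
    + apply Rmult_le_reg_r with (IZR b - IZR a)%R; [lra|].
      unfold Rdiv. rewrite Rmult_assoc, Rinv_l; lra.
Qed.

Lemma band_of_row_end P i p d :
  memb P (mkcube p (zplane P i)) = true ->
  memb P (mkcube (padd p (dvec d)) (zplane P i)) = false ->
  band P (i + 1) (VCell (mkcube p (zplane P i)) d).
Proof.
  intros Hin Hout. split; [split; [exact Hin | exact Hout]|].
  cbn [vc cz mkcube snd]. unfold zplane. lia.
Qed.

Lemma not_hsurf_memb P k p :
  ~ hsurf P k p -> memb P (mkcube p (k - 1)) = memb P (mkcube p k).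
Proof.
  unfold hsurf. intros H.
  destruct (memb P (mkcube p (k - 1))), (memb P (mkcube p k)); tauto.
Qed.

Lemma bottom_beam_row_ends P i v lo b :
  orth_convex_layers P -> 1 <= i <= nlayers P - 1 -> lo <= b ->
  botcell P (zplane P i) (along v b) ->
  ~ hsurf P (zplane P i) (along v (lo - 1)) -> ~ hsurf P (zplane P i) (along v (b + 1)) ->
  memb P (mkcube (along v (lo - 1)) (zplane P i)) = false \/
  memb P (mkcube (along v (b + 1)) (zplane P i)) = false.
Proof.
  intros Hconv Hi Hlob [_ Hunder] Hlo Hb.
  apply not_hsurf_memb in Hlo, Hb.
  destruct (memb P (mkcube (along v (lo - 1)) (zplane P i))) eqn:Elo; [|now left].
  destruct (memb P (mkcube (along v (b + 1)) (zplane P i))) eqn:Eb; [|now right].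
  exfalso.
  assert (Hlayer : zplane P i - 1 = zlo P + i - 1) by (unfold zplane; lia).
  rewrite Hlayer in Hlo, Hb, Hunder.
  rewrite (layer_row_convex P i v (lo - 1) (b + 1) b Hconv) in Hunder; congruence || lia.
Qed.

Lemma bottom_beam_single_candidate P i ptr r x :
  orth_convex_layers P -> 1 <= i <= nlayers P - 1 -> ibeam P i r x ->
  (forall y, ibeam P i r y -> botcell P (zplane P i) y) ->
  exists v, candL P i ptr r v /\ nbeams P i ptr r v 1.
Proof.
  intros Hconv Hi Hx Hbot.
  destruct (beam_extent _ _ _ _ Hx) as [lo [b [Hlob [Hbeam [Hlo Hb]]]]].
  assert (Hbeam_lo : ibeam P i r (along r lo)) by (apply Hbeam; lia).
  assert (Hbeam_b : ibeam P i r (along r b)) by (apply Hbeam; lia).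
  destruct (bottom_beam_row_ends P i r lo b Hconv Hi Hlob (Hbot _ Hbeam_b) Hlo Hb)
    as [Hend|Hend].
  - exists (VCell (mkcube (along r lo) (zplane P i)) (opp (vd r))).
    apply candL_over_beam; cbn [vc vd]; rewrite ?xy_mkcube; [| right; reflexivity | exact Hbeam_lo].
    apply band_of_row_end; [apply (Hbot _ Hbeam_lo)|]. rewrite along_pred. exact Hend.
  - exists (VCell (mkcube (along r b) (zplane P i)) (vd r)).
    apply candL_over_beam; cbn [vc vd]; rewrite ?xy_mkcube; [| left; reflexivity | exact Hbeam_b].
    apply band_of_row_end; [apply (Hbot _ Hbeam_b)|]. rewrite along_succ. exact Hend.
Qed.

Theorem lemma7 (P : list cube) (ptr : Z -> pointer) (L R : Z -> vcell) (i : Z) :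
  is_polycube P ->
  orth_convex_layers P ->
  1 <= i <= nlayers P - 1 ->
  selection_upto P ptr L R i ->
  (* the i-bridge is nonempty ... *)
  (exists q, ibeam P i (R i) q) ->
  (* ... and the i-face containing it is a bottom face *)
  (forall q, iface_of_beam P i (R i) q -> botcell P (zplane P i) q) ->
  (* then the i-bridge is a single beam: i-beam(L_{i+1}) = i-beam(R_i) *)
  forall q, ibeam P i (L (i + 1)) q <-> ibeam P i (R i) q.
Proof.
  intros _ Hconv Hi [Hinit Hsteps] [x Hx] Hbot.
  assert (Hbeam_bot : forall y, ibeam P i (R i) y -> botcell P (zplane P i) y)
    by (intros y Hy; apply Hbot, ibeam_iface, Hy).
  destruct (Z.eq_dec i 1) as [->|Hi1].
  { exfalso. destruct Hinit as [_ [_ [_ [_ [_ [Htop _]]]]]].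
    destruct (Htop x (ibeam_iface _ _ _ _ Hx)) as [Hbelow _].
    destruct (Hbeam_bot x Hx) as [_ Hnot_below]. congruence. }
  destruct (Hsteps i ltac:(lia)) as [_ [[Hempty _] | [_ [HselL _]]]].
  { exfalso. exact (Hempty x (ibeam_clip _ _ _ _ _ Hx)). }
  apply (selectL_single_beam _ _ _ _ _ HselL).
  exact (bottom_beam_single_candidate P i (ptr i) (R i) x Hconv Hi Hx Hbeam_bot).
Qed.
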